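(* Let $M$ be a complete pointed metric space and $Y$ a real Banach space. If $Y_1$ is an absolute summand of $Y$ and $\mathrm{A}(M,Y)$ is dense in $\mathrm{Lip}_0(M,Y)$, then $\mathrm{A}(M,Y_1)$ is dense in $\mathrm{Lip}_0(M,Y_1)$.
   Context: Throughout, metric spaces are complete and pointed, with base point $0$. $\mathrm{Lip}_0(M,Y)$ is the Banach space of Lipschitz maps $f:M\to Y$ with $f(0)=0$, normed by $\|f\|=\sup_{p\neq q}\|f(p)-f(q)\|/d(p,q)$. A map $f$ attains its norm toward $y\in Y$ if there is a sequence $(p_n,q_n)$ in $M\times M$ with $p_n\neq q_n$ such that $[f(p_n)-f(q_n)]/d(p_n,q_n)\to y$ and $\|y\|=\|f\|$; $\mathrm{A}(M,Y)$ is the set of $f$ attaining their norm toward some vector. An absolute norm $|\cdot|_a$ on $\mathbb{R}^2$ is a norm with $|(1,0)|_a=|(0,1)|_a=1$ and $|(p,q)|_a=|(|p|,|q|)|_a$ for all $p,q$. The absolute sum $Y_1\oplus_a Y_2$ of Banach spaces $Y_1,Y_2$ is $Y_1\times Y_2$ with the norm $\|(y_1,y_2)\|_a=|(\|y_1\|,\|y_2\|)|_a$. A Banach space $Y_1$ is an absolute summand of $Y$ if $Y=Y_1\oplus_a Y_2$ (isometrically) for some Banach space $Y_2$ and some absolute norm $|\cdot|_a$. *)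

From HB Require Import structures.
From mathcomp Require Import all_boot all_order all_algebra.
From mathcomp Require Import all_classical all_reals all_analysis.
Set Implicit Arguments. Unset Strict Implicit. Unset Printing Implicit Defensive.
Import Order.TTheory GRing.Theory Num.Theory.
Import numFieldNormedType.Exports.
Local Open Scope classical_set_scope.
Local Open Scope ring_scope.

Section Defs.
Variable R : realType.

Definition is_metric (M : Type) (d : M -> M -> R) : Prop :=
  (forall x y, 0 <= d x y) /\
  (forall x y, d x y = 0 <-> x = y) /\
  (forall x y, d x y = d y x) /\
  (forall x y z, d x z <= d x y + d y z).

Definition complete_metric (M : Type) (d : M -> M -> R) : Prop :=
  is_metric d /\
  (forall u : nat -> M,
     (forall e : R, 0 < e -> exists N : nat, forall m n : nat,
        (N <= m)%N -> (N <= n)%N -> d (u m) (u n) < e) ->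
     exists x : M, forall e : R, 0 < e -> exists N : nat, forall n : nat,
        (N <= n)%N -> d (u n) x < e).

Definition Lip0 (M : Type) (d : M -> M -> R) (x0 : M)
  (Y : normedModType R) (f : M -> Y) : Prop :=
  f x0 = 0 /\ exists L : R, forall p q, `|f p - f q| <= L * d p q.

Definition lipnorm (M : Type) (d : M -> M -> R) (Y : normedModType R)
  (f : M -> Y) : R :=
  sup [set r : R | exists p q : M, p <> q /\ r = `|f p - f q| / d p q].

Definition attains_toward (M : Type) (d : M -> M -> R) (Y : normedModType R)
  (f : M -> Y) (y : Y) : Prop :=
  (exists pq : nat -> M * M,
     (forall n, (pq n).1 <> (pq n).2) /\
     (fun n => (d (pq n).1 (pq n).2)^-1 *: (f (pq n).1 - f (pq n).2))
        @ \oo --> y) /\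
  `|y| = lipnorm d f.

Definition normA (M : Type) (d : M -> M -> R) (x0 : M) (Y : normedModType R)
  (f : M -> Y) : Prop :=
  Lip0 d x0 f /\ exists y : Y, attains_toward d f y.

Definition A_dense (M : Type) (d : M -> M -> R) (x0 : M)
  (Y : normedModType R) : Prop :=
  forall f : M -> Y, Lip0 d x0 f ->
  forall e : R, 0 < e ->
  exists g : M -> Y, normA d x0 g /\ lipnorm d (f \- g) < e.

Definition absolute_norm (N : R -> R -> R) : Prop :=
  (forall p q, 0 <= N p q) /\
  (forall p q, N p q = 0 -> p = 0 /\ q = 0) /\
  (forall l p q, N (l * p) (l * q) = `|l| * N p q) /\
  (forall p q p' q', N (p + p') (q + q') <= N p q + N p' q') /\
  N 1 0 = 1 /\ N 0 1 = 1 /\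
  (forall p q, N p q = N `|p| `|q|).

(* Y1 is an absolute summand of Y: Y is isometrically isomorphic to
   Y1 (+)_a Y2 for some Banach space Y2 and absolute norm N; the linear
   isometric isomorphism is y |-> (P1 y, P2 y). *)
Definition absolute_summand (Y1 Y : completeNormedModType R) : Prop :=
  exists (Y2 : completeNormedModType R) (N : R -> R -> R)
         (P1 : Y -> Y1) (P2 : Y -> Y2),
    absolute_norm N /\
    (forall (a : R) (x y : Y), P1 (a *: x + y) = a *: P1 x + P1 y) /\
    (forall (a : R) (x y : Y), P2 (a *: x + y) = a *: P2 x + P2 y) /\
    bijective (fun y : Y => (P1 y, P2 y)) /\
    (forall y : Y, N `|P1 y| `|P2 y| = `|y|).

End Defs.

From HB Require Import structures.
From mathcomp Require Import all_boot all_order all_algebra.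
From mathcomp Require Import all_classical all_reals all_analysis.
From mathcomp Require Import ring lra.
Set Implicit Arguments. Unset Strict Implicit. Unset Printing Implicit Defensive.
Import Order.TTheory GRing.Theory Num.Theory.
Local Open Scope classical_set_scope.
Local Open Scope ring_scope.

(* Write [Y = Y1 (+)_N Y2] with coordinate maps [P1], [P2] and the isometric
   section [J v = (v, 0)]. Given [f] in [Lip0(M, Y1)], first add [r d(., x0)] in
   a fixed unit direction, if needed, so that [||f||] is not small; then take [G]
   in [A(M, Y)] within [delta] of [J o f], attaining its norm [s = ||G||] toward
   [y]. As [P2 o J = 0], [|P2 y| <= delta < s], so [(|P1 y|, |P2 y|)] lies on the
   [N]-sphere of radius [s] away from the vertical axis, where the [N]-ball has a
   supporting line [a' + l b' <= |P1 y| + l |P2 y|] with [0 <= l <= s / (s - delta)].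
   With [rho] the one-sided derivative of the norm of [Y2] at [P2 y] and
   [u = P1 y / |P1 y|], the map [g = P1 o G + l (rho o P2 o G) u] has
   [||g|| <= |P1 y| + l |P2 y|] by the supporting line; along the pairs where [G]
   attains its norm its difference quotients tend to [P1 y + l |P2 y| u], a vector
   of exactly that norm; and [||f - g|| <= (1 + l) delta]. *)

Section AbsoluteNorm.
Variables (R : realType) (N : R -> R -> R).
Hypothesis hN : absolute_norm N.

Lemma absnormZ l p q : N (l * p) (l * q) = `|l| * N p q.
Proof. by case: hN => _ [_ []]. Qed.

Lemma absnormD p q p' q' : N (p + p') (q + q') <= N p q + N p' q'.
Proof. by case: hN => _ [_ [_ []]]. Qed.

Lemma absnorm_abs p q : N p q = N `|p| `|q|.
Proof. by case: hN => _ [_ [_ [_ [_ [_ ]]]]]. Qed.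

Lemma absnorm_l0 p : N p 0 = `|p|.
Proof.
have [_ [_ [_ [_ [N10 _]]]]] := hN.
by have := absnormZ p 1 0; rewrite mulr1 mulr0 N10 mulr1.
Qed.

Lemma absnorm_0r q : N 0 q = `|q|.
Proof.
have [_ [_ [_ [_ [_ [N01 _]]]]]] := hN.
by have := absnormZ q 0 1; rewrite mulr1 mulr0 N01 mulr1.
Qed.

Lemma absnormNl p q : N (- p) q = N p q.
Proof. by rewrite absnorm_abs normrN -absnorm_abs. Qed.

Lemma absnormNr p q : N p (- q) = N p q.
Proof. by rewrite absnorm_abs normrN -absnorm_abs. Qed.

Lemma absnorm_conv l m p q p' q' : 0 <= l -> 0 <= m ->
  N (l * p + m * p') (l * q + m * q') <= l * N p q + m * N p' q'.
Proof.
move=> l_ge0 m_ge0; apply: le_trans (absnormD _ _ _ _) _.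
by rewrite !absnormZ (ger0_norm l_ge0) (ger0_norm m_ge0).
Qed.

Lemma ge_absnorm_l p q : `|p| <= N p q.
Proof.
have := absnormD p q p (- q); rewrite subrr absnormNr absnorm_l0.
by rewrite -[p + p]mulr2n normrMn; lra.
Qed.

Lemma ge_absnorm_r p q : `|q| <= N p q.
Proof.
have := absnormD p q (- p) q; rewrite subrr absnormNl absnorm_0r.
by rewrite -[q + q]mulr2n normrMn; lra.
Qed.

(* [(p, q')] is a convex combination of [(p, q)] and [(p, - q)]. *)
Lemma absnorm_ler_r p q q' : 0 <= q' -> q' <= q -> N p q' <= N p q.
Proof.
move=> q'_ge0 q'_le_q; have [q_gt0|q_eq0] : 0 < q \/ q = 0.
  by case: (ltrgt0P q) => [h|h|h]; [left|lra|right].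
- have := @absnorm_conv ((q + q') / 2) ((q - q') / 2) p q p (- q).
  rewrite absnormNr.
  have -> : (q + q') / 2 * p + (q - q') / 2 * p = q * p by field.
  have -> : (q + q') / 2 * q + (q - q') / 2 * - q = q * q' by field.
  have -> : (q + q') / 2 * N p q + (q - q') / 2 * N p q = q * N p q by field.
  rewrite absnormZ ger0_norm; last lra.
  by move=> /(_ _ _) le_qN; rewrite -(ler_pM2l q_gt0) le_qN //; lra.
- by rewrite q_eq0; have -> : q' = 0 by lra.
Qed.

(* For [b < s], [(a, b)] is the rightmost point of its row in the ball of
   radius [s], because [(0, b)] lies inside the ball; higher rows are shorter. *)
Lemma absnorm_row_le s a b a' b' : 0 <= a -> 0 <= b -> b < s -> N a b = s ->
  0 <= a' -> b <= b' -> N a' b' <= s -> a' <= a.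
Proof.
move=> a_ge0 b_ge0 b_lt_s Nab a'_ge0 b_le_b' /(le_trans (absnorm_ler_r _ b_ge0 b_le_b')).
move=> Na'b; rewrite leNgt; apply/negP => a_lt_a'.
have a'_gt0 : 0 < a' by lra.
set l := a / a'.
have l_ge0 : 0 <= l by rewrite divr_ge0.
have l_lt1 : l < 1 by rewrite ltr_pdivrMr // mul1r.
have := @absnorm_conv l (1 - l) a' b 0 b l_ge0 ltac:(lra).
rewrite mulr0 addr0 absnorm_0r ger0_norm //.
have -> : l * a' = a by rewrite /l; field; lra.
have -> : l * b + (1 - l) * b = b by ring.
rewrite Nab.
have : l * N a' b <= l * s by rewrite ler_wpM2l.
have : (1 - l) * b < (1 - l) * s by rewrite ltr_pM2l //; lra.
lra.
Qed.

(* The chord between the two points crosses the row of [b] inside the ball,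
   hence to the left of [(a, b)] by [absnorm_row_le]. *)
Lemma absnorm_slope_le s a b a1 b1 a2 b2 :
  0 <= a -> 0 <= b -> b < s -> N a b = s ->
  0 <= a1 -> 0 <= b1 -> 0 <= a2 -> b1 < b -> b < b2 ->
  N a1 b1 <= s -> N a2 b2 <= s ->
  (a1 - a) / (b - b1) <= (a - a2) / (b2 - b).
Proof.
move=> a_ge0 b_ge0 b_lt_s Nab a1_ge0 b1_ge0 a2_ge0 b1_lt_b b_lt_b2 N1 N2.
set D1 := b - b1; set D2 := b2 - b.
have D1_gt0 : 0 < D1 by rewrite /D1; lra.
have D2_gt0 : 0 < D2 by rewrite /D2; lra.
set X := (D2 * a1 + D1 * a2) / (D1 + D2).
have X_ge0 : 0 <= X by rewrite /X divr_ge0 //; nra.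
have NXb : N X b <= s.
  have := @absnorm_conv D2 D1 a1 b1 a2 b2 ltac:(lra) ltac:(lra).
  have -> : D2 * a1 + D1 * a2 = (D1 + D2) * X by rewrite /X; field; lra.
  have -> : D2 * b1 + D1 * b2 = (D1 + D2) * b by rewrite /D1 /D2; ring.
  rewrite absnormZ ger0_norm; last lra.
  have : D2 * N a1 b1 <= D2 * s by rewrite ler_wpM2l //; lra.
  have : D1 * N a2 b2 <= D1 * s by rewrite ler_wpM2l //; lra.
  move=> h1 h2 h3; rewrite -(@ler_pM2l _ (D1 + D2)); lra.
have := absnorm_row_le a_ge0 b_ge0 b_lt_s Nab X_ge0 (lexx b) NXb.
rewrite /X ler_pdivrMr; last lra.
by move=> X_le_a; rewrite ler_pdivrMr // mulrAC ler_pdivlMr //; nra.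
Qed.

(* The supremum of the slopes from below is the slope of a supporting line. *)
Lemma absnorm_support s a b : 0 <= a -> 0 <= b -> b < s -> N a b = s ->
  exists2 l, 0 <= l & forall a' b', 0 <= a' -> 0 <= b' -> N a' b' <= s ->
    a' + l * b' <= a + l * b.
Proof.
move=> a_ge0 b_ge0 b_lt_s Nab.
have slope_le := absnorm_slope_le a_ge0 b_ge0 b_lt_s Nab.
pose S := [set r : R | r = 0 \/ exists a1 b1, [/\ 0 <= a1, 0 <= b1, b1 < b,
   N a1 b1 <= s & r = (a1 - a) / (b - b1)]].
have S0 : S 0 by left.
have S_ub : ubound S (a / (s - b)).
  move=> r [->|[a1 [b1 [a1_ge0 b1_ge0 b1_lt_b N1 ->]]]].
    by rewrite divr_ge0 //; lra.
  have := slope_le a1 b1 0 s a1_ge0 b1_ge0 (lexx 0) b1_lt_b b_lt_s N1.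
  by rewrite absnorm_0r subr0 ger0_norm; [apply|lra].
have S_sup : has_sup S by split; [exists 0 | exists (a / (s - b))].
exists (sup S); first exact: sup_upper_bound.
move=> a' b' a'_ge0 b'_ge0; case: (ltrgtP b' b) => [b'_lt_b|b_lt_b'|->] N'.
- have : (a' - a) / (b - b') <= sup S.
    by apply: sup_upper_bound => //; right; exists a', b'.
  by rewrite ler_pdivrMr; [nra | lra].
- have : sup S <= (a - a') / (b' - b).
    apply: ge_sup; first by exists 0.
    move=> r [->|[a1 [b1 [a1_ge0 b1_ge0 b1_lt_b N1 ->]]]]; last exact: slope_le.
    have := absnorm_row_le a_ge0 b_ge0 b_lt_s Nab a'_ge0 (ltW b_lt_b') N'.
    by move=> a'_le_a; rewrite divr_ge0 //; lra.
  by rewrite ler_pdivlMr; [nra | lra].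
- by have := absnorm_row_le a_ge0 b_ge0 b_lt_s Nab a'_ge0 (lexx b) N'; lra.
Qed.

End AbsoluteNorm.

Section NormDirectionalDerivative.
Variables (R : realType) (V : normedModType R) (y : V).

Definition norm_dq (z : V) (t : R) : R := (`|y + t *: z| - `|y|) / t.

(* The one-sided derivative of the norm at [y] in direction [z] (the difference
   quotients decrease with [t]). It is sublinear, 1-Lipschitz and equals [`|y|]
   at [y], so it replaces a norming functional of [y] (and Hahn-Banach). *)
Definition norm_ddir (z : V) : R :=
  inf [set norm_dq z t | t in [set t : R | 0 < t]].

Lemma norm_dq_ge z t : 0 < t -> - `|z| <= norm_dq z t.
Proof.
move=> t_gt0; rewrite /norm_dq ler_pdivlMr //.
have := ler_normB (y + t *: z) (t *: z).
by rewrite addrK normrZ gtr0_norm //; lra.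
Qed.

Lemma has_inf_norm_dq z : has_inf [set norm_dq z t | t in [set t : R | 0 < t]].
Proof.
split; first by exists (norm_dq z 1); exists 1 => //=.
by exists (- `|z|) => _ [t t_gt0 <-]; exact: norm_dq_ge.
Qed.

Lemma norm_ddir_le z t : 0 < t -> norm_ddir z <= norm_dq z t.
Proof. by move=> t_gt0; apply: (ge_inf (has_inf_norm_dq z).2); exists t. Qed.

Lemma norm_ddir_adherent z e : 0 < e ->
  exists2 t, 0 < t & norm_dq z t < norm_ddir z + e.
Proof.
by move=> e_gt0; have [_ [t t_gt0 <-]] := inf_adherent e_gt0 (has_inf_norm_dq z); exists t.
Qed.

Lemma norm_ddir_ge z m : (forall t, 0 < t -> m <= norm_dq z t) -> m <= norm_ddir z.
Proof.
move=> le_m; apply: lb_le_inf; first exact: (has_inf_norm_dq z).1.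
by move=> _ [t t_gt0 <-]; exact: le_m.
Qed.

Lemma norm_dq_leD z z' t : 0 < t -> norm_dq z t <= norm_dq z' t + `|z - z'|.
Proof.
move=> t_gt0; have : `|y + t *: z| <= `|y + t *: z'| + t * `|z - z'|.
  have -> : y + t *: z = (y + t *: z') + t *: (z - z').
    by rewrite scalerBr addrA addrAC addrK.
  by rewrite -[t in t * _]gtr0_norm // -normrZ ler_normD.
by rewrite /norm_dq ler_pdivrMr // mulrDl divfK ?gt_eqF //; lra.
Qed.

(* Convexity of [t |-> `|y + t *: z|]. *)
Lemma norm_dq_homo z t t' : 0 < t -> t <= t' -> norm_dq z t <= norm_dq z t'.
Proof.
move=> t_gt0 t_le_t'; have t'_gt0 : 0 < t' by lra.
set l := t / t'.
have l_ge0 : 0 <= l by rewrite divr_ge0 //; lra.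
have l_le1 : l <= 1 by rewrite ler_pdivrMr // mul1r.
have conv : `|y + t *: z| <= (1 - l) * `|y| + l * `|y + t' *: z|.
  have -> : y + t *: z = (1 - l) *: y + l *: (y + t' *: z).
    rewrite scalerDr scalerA mulfVK ?gt_eqF //.
    by rewrite addrA -scalerDl subrK scale1r.
  have l'_ge0 : 0 <= 1 - l by lra.
  by apply: le_trans (ler_normD _ _) _; rewrite !normrZ (ger0_norm l'_ge0) -normrM (ger0_norm l_ge0).
rewrite /norm_dq ler_pdivrMr // mulrAC ler_pdivlMr //.
have : t' * `|y + t *: z| <= t' * ((1 - l) * `|y| + l * `|y + t' *: z|).
  by rewrite ler_pM2l.
have -> : t' * ((1 - l) * `|y| + l * `|y + t' *: z|) =
   (t' - t) * `|y| + t * `|y + t' *: z| by rewrite /l; field; lra.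
lra.
Qed.

Lemma norm_dqD z w t : 0 < t ->
  norm_dq (z + w) t <= norm_dq z (2 * t) + norm_dq w (2 * t).
Proof.
move=> t_gt0; have t2_gt0 : 0 < 2 * t by lra.
have mid : `|y + t *: (z + w)| <= (`|y + (2 * t) *: z| + `|y + (2 * t) *: w|) / 2.
  have -> : y + t *: (z + w) =
      2^-1 *: (y + (2 * t) *: z) + 2^-1 *: (y + (2 * t) *: w).
    rewrite !scalerDr !scalerA mulrA mulVf ?mul1r // addrACA -scalerDl.
    have halves : (2^-1 + 2^-1 : R) = 1 by field.
    by rewrite halves scale1r.
  apply: le_trans (ler_normD _ _) _.
  by rewrite !normrZ gtr0_norm ?invr_gt0 //; lra.
rewrite /norm_dq ler_pdivrMr //.
have -> : ((`|y + (2 * t) *: z| - `|y|) / (2 * t) +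
  (`|y + (2 * t) *: w| - `|y|) / (2 * t)) * t =
  (`|y + (2 * t) *: z| + `|y + (2 * t) *: w|) / 2 - `|y| by field; lra.
lra.
Qed.

Lemma norm_dqZ z k t : 0 < k -> 0 < t -> norm_dq (k *: z) t = k * norm_dq z (k * t).
Proof. by move=> k_gt0 t_gt0; rewrite /norm_dq scalerA [t * k]mulrC; field; lra. Qed.

Lemma norm_ddir_leD z z' : norm_ddir z <= norm_ddir z' + `|z - z'|.
Proof.
apply/ler_addgt0Pr => e e_gt0.
have [t t_gt0 lt_t] := norm_ddir_adherent z' e_gt0.
have := norm_ddir_le z t_gt0; have := norm_dq_leD z z' t_gt0; lra.
Qed.

Lemma norm_ddir_dist z z' : `|norm_ddir z - norm_ddir z'| <= `|z - z'|.
Proof.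
have := norm_ddir_leD z z'; have := norm_ddir_leD z' z.
by rewrite distrC ler_norml; lra.
Qed.

Lemma norm_ddirD z w : norm_ddir (z + w) <= norm_ddir z + norm_ddir w.
Proof.
apply/ler_addgt0Pr => e e_gt0; have e2_gt0 : 0 < e / 2 by rewrite divr_gt0.
have [t1 t1_gt0 lt1] := norm_ddir_adherent z e2_gt0.
have [t2 t2_gt0 lt2] := norm_ddir_adherent w e2_gt0.
set t := Num.min t1 t2.
have t_gt0 : 0 < t by rewrite lt_min t1_gt0 t2_gt0.
have t2_gt0' : 0 < t / 2 by rewrite divr_gt0.
have := norm_ddir_le (z + w) t2_gt0'; have := norm_dqD z w t2_gt0'.
have -> : 2 * (t / 2) = t by field.
have t_le1 : t <= t1 by rewrite ge_min lexx.
have t_le2 : t <= t2 by rewrite ge_min lexx orbT.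
have := norm_dq_homo z t_gt0 t_le1; have := norm_dq_homo w t_gt0 t_le2.
lra.
Qed.

Lemma norm_ddirZ_le z k : 0 < k -> norm_ddir (k *: z) <= k * norm_ddir z.
Proof.
move=> k_gt0; apply/ler_addgt0Pr => e e_gt0.
have [t t_gt0 lt_t] := norm_ddir_adherent z (divr_gt0 e_gt0 k_gt0).
have tk_gt0 : 0 < t / k by rewrite divr_gt0.
have := norm_ddir_le (k *: z) tk_gt0.
rewrite norm_dqZ // [k * (t / k)]mulrC divfK ?gt_eqF // => le_k.
have : k * norm_dq z t <= k * (norm_ddir z + e / k) by rewrite ler_pM2l // ltW.
rewrite mulrDr [k * (e / k)]mulrC divfK ?gt_eqF //; lra.
Qed.

Lemma norm_ddirZ z k : 0 < k -> norm_ddir (k *: z) = k * norm_ddir z.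
Proof.
move=> k_gt0; have kV_gt0 : 0 < k^-1 by rewrite invr_gt0.
apply/le_anti; rewrite norm_ddirZ_le //=.
have := norm_ddirZ_le (k *: z) kV_gt0.
rewrite scalerA mulVf ?gt_eqF // scale1r => le_kV.
by rewrite -(ler_pM2l kV_gt0) mulrA mulVf ?gt_eqF ?mul1r.
Qed.

Lemma norm_ddir0 : norm_ddir 0 = 0.
Proof.
by have := norm_ddirZ 0 (ltr0Sn R 1); rewrite scaler0; lra.
Qed.

Lemma norm_dq_self t : 0 < t -> norm_dq y t = `|y|.
Proof.
move=> t_gt0; rewrite /norm_dq -{1}[y]scale1r.
rewrite -scalerDl normrZ ger0_norm; last lra.
by field; lra.
Qed.

Lemma norm_ddir_self : norm_ddir y = `|y|.
Proof.
apply/le_anti; rewrite -{1}(norm_dq_self ltr01) norm_ddir_le //=.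
by apply: norm_ddir_ge => t t_gt0; rewrite norm_dq_self.
Qed.

Lemma norm_ddirN_self : norm_ddir (- y) = - `|y|.
Proof.
apply/le_anti; apply/andP; split.
  by have := norm_ddir_le (- y) ltr01; rewrite /norm_dq scale1r subrr normr0 divr1 sub0r.
by apply: norm_ddir_ge => t t_gt0; have := norm_dq_ge (- y) t_gt0; rewrite normrN.
Qed.

(* Sublinearity bounds the quotient by [norm_ddir (+- w)], which are within
   [`|w - y|] of [norm_ddir (+- y) = +- `|y|]. *)
Lemma norm_ddir_quot z z' D w : 0 < D -> z - z' = D *: w ->
  `|(norm_ddir z - norm_ddir z') / D - `|y| | <= `|w - y|.
Proof.
move=> D_gt0 zz'.
have up : norm_ddir z <= norm_ddir z' + D * (`|y| + `|w - y|).
  have -> : z = z' + D *: w by rewrite -zz' addrC subrK.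
  apply: le_trans (norm_ddirD _ _) _; rewrite norm_ddirZ // lerD2l ler_pM2l //.
  by rewrite -norm_ddir_self norm_ddir_leD.
have down : norm_ddir z' <= norm_ddir z + D * (- `|y| + `|w - y|).
  have -> : z' = z + D *: (- w) by rewrite scalerN -zz' opprB addrC subrK.
  apply: le_trans (norm_ddirD _ _) _; rewrite norm_ddirZ // lerD2l ler_pM2l //.
  apply: le_trans (norm_ddir_leD (- w) (- y)) _.
  by rewrite norm_ddirN_self -opprD normrN.
rewrite ler_norml; apply/andP; split.
- by rewrite lerBrDr ler_pdivlMr //; nra.
- by rewrite lerBlDr ler_pdivrMr //; nra.
Qed.

End NormDirectionalDerivative.

Lemma subrACA (V : zmodType) (a b c e : V) : (a - b) - (c - e) = (a - c) - (b - e).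
Proof. by rewrite opprD addrACA -opprD. Qed.

Section Convergence.
Variables (R : realType) (V W : normedModType R).

Lemma cvg_norm_le (u : nat -> V) l c :
  u @ \oo --> l -> (forall n, `|u n| <= c) -> `|l| <= c.
Proof.
move=> u_l u_le; rewrite leNgt; apply/negP => c_lt_l.
have [n0 _ u_gt] := cvgr_norm_gt _ u_l _ c_lt_l.
by have := u_gt n0 (leqnn n0); rewrite ltNge u_le.
Qed.

Lemma cvg_dist_le (u : nat -> V) (v : nat -> W) l m K : 0 <= K ->
  (forall n, `|m - v n| <= K * `|l - u n|) -> u @ \oo --> l -> v @ \oo --> m.
Proof.
move=> K_ge0 v_le /cvgrPdist_lt u_l; apply/cvgrPdist_lt => e e_gt0.
have eK_gt0 : 0 < e / (K + 1) by rewrite divr_gt0 //; lra.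
apply: filterS (u_l _ eK_gt0) => n lu_lt; apply: le_lt_trans (v_le n) _.
rewrite ltr_pdivlMr in lu_lt; last lra.
have := normr_ge0 (l - u n); nra.
Qed.

End Convergence.

Section LipschitzMaps.
Variables (R : realType) (M : Type) (d : M -> M -> R).
Hypothesis hd : is_metric d.

Lemma metric_ge0 p q : 0 <= d p q. Proof. by case: hd. Qed.
Lemma metricC p q : d p q = d q p. Proof. by case: hd => _ [_ []]. Qed.
Lemma metric_triangle p q r : d p r <= d p q + d q r.
Proof. by case: hd => _ [_ [_]]. Qed.
Lemma metric_eq0 p q : d p q = 0 <-> p = q. Proof. by case: hd => _ []. Qed.
Lemma metricxx p : d p p = 0. Proof. exact/metric_eq0. Qed.

Lemma metric_gt0 p q : p <> q -> 0 < d p q.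
Proof. by move=> pq; rewrite lt_def metric_ge0 andbT; apply/eqP => /metric_eq0. Qed.

Lemma metric_dist_le p q r : `|d p r - d q r| <= d p q.
Proof.
have := metric_triangle p q r; have := metric_triangle q p r.
by rewrite (metricC q p) ler_norml; lra.
Qed.

Variable Y : normedModType R.

Definition is_lipschitz (u : M -> Y) : Prop :=
  exists L : R, forall p q, `|u p - u q| <= L * d p q.

Definition dquot (u : M -> Y) (pq : M * M) : Y :=
  (d pq.1 pq.2)^-1 *: (u pq.1 - u pq.2).

Lemma is_lipschitzB u v : is_lipschitz u -> is_lipschitz v -> is_lipschitz (u \- v).
Proof.
move=> [Lu hu] [Lv hv]; exists (Lu + Lv) => p q /=.
rewrite subrACA; apply: le_trans (ler_normB _ _) _; rewrite mulrDl; exact: lerD.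
Qed.

Lemma lipnorm_ge_quot u p q : is_lipschitz u -> p <> q ->
  `|u p - u q| / d p q <= lipnorm d u.
Proof.
move=> [L hL] pq; apply: sup_upper_bound; last by exists p, q.
split; first by exists (`|u p - u q| / d p q), p, q.
by exists L => _ [p' [q' [p'q' ->]]]; rewrite ler_pdivrMr ?metric_gt0.
Qed.

Lemma lipnorm_dist_le u p q : is_lipschitz u -> `|u p - u q| <= lipnorm d u * d p q.
Proof.
move=> u_lip; have [->|pq] := pselect (p = q).
  by rewrite subrr normr0 metricxx mulr0.
by rewrite -ler_pdivrMr ?metric_gt0 //; exact: lipnorm_ge_quot.
Qed.

Lemma lipnorm_subsingleton (u : M -> Y) : (forall p q : M, p = q) -> lipnorm d u = 0.
Proof.
move=> M_sub; rewrite /lipnorm.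
have -> : [set r : R | exists p q : M, p <> q /\ r = `|u p - u q| / d p q] = set0.
  by apply/seteqP; split => // r [p [q [pq _]]]; exact: pq.
exact: sup0.
Qed.

Lemma lipnorm_le (u : M -> Y) C : 0 <= C ->
  (forall p q, p <> q -> `|u p - u q| <= C * d p q) -> lipnorm d u <= C.
Proof.
move=> C_ge0 u_le; have [[p [q pq]]|M_sub] := pselect (exists p q : M, p <> q).
  apply: ge_sup; first by exists (`|u p - u q| / d p q), p, q.
  by move=> _ [p' [q' [p'q' ->]]]; rewrite ler_pdivrMr ?metric_gt0 //; apply: u_le.
rewrite lipnorm_subsingleton // => p q.
by apply: contrapT => pq; apply: M_sub; exists p, q.
Qed.

Lemma lipnorm_ge0 u : is_lipschitz u -> 0 <= lipnorm d u.
Proof.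
move=> u_lip; have [[p [q pq]]|M_sub] := pselect (exists p q : M, p <> q).
  apply: le_trans (lipnorm_ge_quot u_lip pq).
  by rewrite divr_ge0 ?metric_ge0.
rewrite lipnorm_subsingleton // => p q.
by apply: contrapT => pq; apply: M_sub; exists p, q.
Qed.

Lemma lipnormD_le u v : is_lipschitz u -> is_lipschitz v ->
  lipnorm d (u \+ v) <= lipnorm d u + lipnorm d v.
Proof.
move=> u_lip v_lip; apply: lipnorm_le => [|p q _ /=].
  by rewrite addr_ge0 // lipnorm_ge0.
rewrite opprD addrACA mulrDl; apply: le_trans (ler_normD _ _) _.
by rewrite lerD // lipnorm_dist_le.
Qed.

Lemma lipnorm_le_addB u v : is_lipschitz v -> is_lipschitz (u \- v) ->
  lipnorm d u <= lipnorm d v + lipnorm d (u \- v).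
Proof.
move=> v_lip uv_lip; have := lipnormD_le v_lip uv_lip.
by have -> : v \+ (u \- v) = u by apply/funext => p /=; rewrite addrC subrK.
Qed.

Lemma lipnormB_le u v w : is_lipschitz (u \- v) -> is_lipschitz (v \- w) ->
  lipnorm d (u \- w) <= lipnorm d (u \- v) + lipnorm d (v \- w).
Proof.
move=> uv_lip vw_lip; have := lipnormD_le uv_lip vw_lip.
by have -> : (u \- v) \+ (v \- w) = u \- w by apply/funext => p /=; rewrite addrA subrK.
Qed.

Lemma lipnorm_isometry_comp (Z : normedModType R) (J : Y -> Z) u :
  (forall v v', `|J v - J v'| = `|v - v'|) -> lipnorm d (J \o u) = lipnorm d u.
Proof.
move=> J_iso; rewrite /lipnorm; congr sup; apply/seteqP.
by split => _ [p [q [pq ->]]]; exists p, q; rewrite /= J_iso.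
Qed.

Lemma attains_toward_cvg u pq w : is_lipschitz u -> (forall n, (pq n).1 <> (pq n).2) ->
  (fun n => dquot u (pq n)) @ \oo --> w -> lipnorm d u <= `|w| ->
  attains_toward d u w.
Proof.
move=> u_lip pq_neq u_w u_le; split; first by exists pq.
apply/le_anti; rewrite u_le andbT; apply: (cvg_norm_le u_w) => n.
rewrite normrZ ger0_norm ?invr_ge0 ?metric_ge0 // mulrC.
exact: lipnorm_ge_quot.
Qed.

Lemma normA_cst0 x0 p1 : p1 <> x0 -> normA d x0 (fun _ : M => 0 : Y).
Proof.
move=> p1x0; have cst_lip : is_lipschitz (fun _ : M => 0 : Y).
  by exists 0 => p q; rewrite subrr normr0 mul0r.
split; first by split.
exists 0; apply: (@attains_toward_cvg _ (fun _ => (p1, x0))) => //.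
  by rewrite /dquot subrr scaler0; exact: cvg_cst.
by rewrite normr0; apply: lipnorm_le => // p q _; rewrite subrr normr0 mul0r.
Qed.

Lemma A_dense_two_points x0 : A_dense d x0 Y -> exists p, p <> x0.
Proof.
move=> A_dense_Y; have cst0 : Lip0 d x0 (fun _ : M => 0 : Y).
  by split => //; exists 0 => p q; rewrite subrr normr0 mul0r.
have [g [[_ [_ [[pq [pq_neq _]] _]]] _]] := A_dense_Y _ cst0 1 ltr01.
have [p1x0|] := pselect ((pq 0%N).1 = x0); last by exists (pq 0%N).1.
by exists (pq 0%N).2 => p2x0; apply: (pq_neq 0%N); rewrite p1x0 p2x0.
Qed.

Lemma A_dense_trivial x0 p1 : (forall v : Y, v = 0) -> p1 <> x0 -> A_dense d x0 Y.
Proof.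
move=> Y0 p1x0 f _ e e_gt0; exists (fun _ => 0); split; first exact: normA_cst0 p1x0.
apply: le_lt_trans e_gt0; apply: lipnorm_le => // p q _.
by rewrite (Y0 (_ - _)) normr0 mul0r.
Qed.

(* Adding [r d(., x0)] in a unit direction makes the norm at least [r / 2]
   unless it already was. *)
Lemma exists_large_perturbation x0 (f : M -> Y) (v : Y) p1 r :
  Lip0 d x0 f -> v <> 0 -> p1 <> x0 -> 0 < r ->
  exists fp, [/\ Lip0 d x0 fp, lipnorm d (f \- fp) <= r & r / 2 <= lipnorm d fp].
Proof.
move=> [f0 [L f_L]] v_neq0 p1x0 r_gt0; have f_lip : is_lipschitz f by exists L.
pose u0 := `|v|^-1 *: v; have u0_1 : `|u0| = 1.
  by rewrite normrZ normfV normr_id mulVf // normr_eq0; apply/eqP.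
have [f_large|f_small] := lerP (r / 2) (lipnorm d f).
  exists f; split; [by split => //; exists L | | exact: f_large].
  apply: lipnorm_le => [|p q _ /=]; first lra.
  by rewrite !subrr normr0 mulr_ge0 ?metric_ge0 //; lra.
pose fp p := f p + (r * d p x0) *: u0.
have fpB p q : fp p - fp q = (f p - f q) + (r * (d p x0 - d q x0)) *: u0.
  by rewrite /fp opprD addrACA -scalerBl mulrBr.
have dist_le p q : `|(r * (d p x0 - d q x0)) *: u0| <= r * d p q.
  by rewrite normrZ u0_1 mulr1 normrM gtr0_norm // ler_pM2l // metric_dist_le.
have fp_lip : is_lipschitz fp.
  exists (L + r) => p q; rewrite fpB mulrDl; apply: le_trans (ler_normD _ _) _.
  exact: lerD.
exists fp; split.
- by split => //; rewrite /fp f0 metricxx mulr0 scale0r addr0.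
- apply: lipnorm_le => [|p q _ /=]; first lra.
  by rewrite subrACA -opprB normrN fpB addrC addKr.
- have D_gt0 := metric_gt0 p1x0.
  apply: le_trans (lipnorm_ge_quot fp_lip p1x0); rewrite ler_pdivlMr //.
  rewrite fpB metricxx subr0.
  have := ler_normB (f p1 - f x0 + (r * d p1 x0) *: u0) (f p1 - f x0).
  rewrite addrC addKr normrZ u0_1 mulr1 normrM !gtr0_norm //.
  have := lipnorm_dist_le p1 x0 f_lip; nra.
Qed.

End LipschitzMaps.

Section AbsoluteSummand.
Variables (R : realType) (Y Y1 Y2 : normedModType R) (N : R -> R -> R).
Variables (P1 : Y -> Y1) (P2 : Y -> Y2) (J : Y1 -> Y).
Hypothesis hN : absolute_norm N.
Hypothesis P1_linear : forall (a : R) (x z : Y), P1 (a *: x + z) = a *: P1 x + P1 z.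
Hypothesis P2_linear : forall (a : R) (x z : Y), P2 (a *: x + z) = a *: P2 x + P2 z.
Hypothesis normP : forall z, N `|P1 z| `|P2 z| = `|z|.
Hypotheses (P1J : forall v, P1 (J v) = v) (P2J : forall v, P2 (J v) = 0).

(* Local: a global instance would survive the section as a canonical structure
   for every function, with the linearity proof left as an open goal. *)
#[local] HB.instance Definition _ := GRing.isLinear.Build _ _ _ _ P1 P1_linear.
#[local] HB.instance Definition _ := GRing.isLinear.Build _ _ _ _ P2 P2_linear.

Lemma normP1_le z : `|P1 z| <= `|z|.
Proof. by rewrite -normP -[X in X <= _]normr_id ge_absnorm_l. Qed.

Lemma normP2_le z : `|P2 z| <= `|z|.
Proof. by rewrite -normP -[X in X <= _]normr_id ge_absnorm_r. Qed.

Lemma section_isometry v v' : `|J v - J v'| = `|v - v'|.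
Proof. by rewrite -normP !linearB /= !P1J !P2J subrr normr0 absnorm_l0 // normr_id. Qed.

Lemma section0 : J 0 = 0.
Proof. by apply/normr0_eq0; rewrite -normP P1J P2J !normr0 absnorm_l0 // normr0. Qed.

Variables (M : Type) (d : M -> M -> R) (x0 : M).
Hypothesis hd : is_metric d.

Lemma section_Lip0 (phi : M -> Y1) : Lip0 d x0 phi -> Lip0 d x0 (J \o phi).
Proof.
move=> [phi0 [L phi_L]]; split; first by rewrite /= phi0 section0.
by exists L => p q; rewrite /= section_isometry.
Qed.

Section Approximation.
Variables (phi : M -> Y1) (G : M -> Y) (y : Y).
Hypotheses (phi_lip : is_lipschitz d phi) (G_Lip0 : Lip0 d x0 G) (G_y : attains_toward d G y).
Local Notation s := (lipnorm d G).
Local Notation delta := (lipnorm d ((J \o phi) \- G)).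
Hypothesis delta_lt_s : delta < s.
Local Notation a := `|P1 y|.
Local Notation b := `|P2 y|.

Let JphiG_lip : is_lipschitz d ((J \o phi) \- G).
Proof.
apply: (is_lipschitzB _ (proj2 G_Lip0)); have [L phi_L] := phi_lip.
by exists L => p q; rewrite /= section_isometry.
Qed.

Lemma distP1_le p q : `|(phi p - phi q) - P1 (G p - G q)| <= delta * d p q.
Proof.
have -> : (phi p - phi q) - P1 (G p - G q) =
    P1 (((J \o phi) \- G) p - ((J \o phi) \- G) q).
  by rewrite /= !linearB /= !P1J addrACA.
by apply: le_trans (normP1_le _) _; exact: lipnorm_dist_le.
Qed.

Lemma distP2_le p q : `|P2 (G p - G q)| <= delta * d p q.
Proof.
have -> : P2 (G p - G q) = - P2 (((J \o phi) \- G) p - ((J \o phi) \- G) q).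
  by rewrite /= !linearB /= !P2J !oppr0 !opprK !add0r.
by rewrite normrN; apply: le_trans (normP2_le _) _; exact: lipnorm_dist_le.
Qed.

Lemma P2_attained_le : b <= delta.
Proof.
have [[pq [pq_neq G_pq]] _] := G_y.
apply: (@cvg_norm_le _ _ (fun n => P2 (dquot d G (pq n)))).
  by apply: (cvg_dist_le ler01 _ G_pq) => n; rewrite mul1r -linearB normP2_le.
move=> n; rewrite /dquot linearZ normrZ ger0_norm ?invr_ge0 ?metric_ge0 // mulrC.
by rewrite ler_pdivrMr ?metric_gt0 // distP2_le.
Qed.

Lemma absnorm_attained : N a b = s.
Proof. by rewrite normP; case: G_y. Qed.

Lemma P1_attained_gt0 : 0 < a.
Proof.
rewrite lt_def normr_ge0 andbT; apply/eqP => a0.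
have := le_lt_trans P2_attained_le delta_lt_s.
by rewrite -absnorm_attained a0 absnorm_0r // normr_id ltxx.
Qed.

Section Support.
Variable la : R.
Hypothesis la_ge0 : 0 <= la.
Hypothesis la_support : forall a' b', 0 <= a' -> 0 <= b' -> N a' b' <= s ->
  a' + la * b' <= a + la * b.

Local Notation u := (a^-1 *: P1 y).
Local Notation rho := (norm_ddir (P2 y)).

Let norm_u : `|u| = 1.
Proof.
by rewrite normrZ gtr0_norm ?invr_gt0 ?P1_attained_gt0 // mulVf ?gt_eqF ?P1_attained_gt0.
Qed.

Definition correction (p : M) : Y1 := P1 (G p) + (la * rho (P2 (G p))) *: u.

Lemma correctionB p q : correction p - correction q =
  P1 (G p - G q) + (la * (rho (P2 (G p)) - rho (P2 (G q)))) *: u.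
Proof. by rewrite /correction opprD addrACA -scalerBl -mulrBr linearB. Qed.

Lemma rho_dist p q : `|rho (P2 (G p)) - rho (P2 (G q))| <= `|P2 (G p - G q)|.
Proof. by rewrite linearB; exact: norm_ddir_dist. Qed.

Lemma correction_dist_le p q : `|correction p - correction q| <= (a + la * b) * d p q.
Proof.
have [->|pq] := pselect (p = q); first by rewrite subrr normr0 metricxx // mulr0.
have D_gt0 := metric_gt0 hd pq.
set a' := `|P1 (G p - G q)| / d p q; set b' := `|P2 (G p - G q)| / d p q.
have N' : N a' b' <= s.
  rewrite /a' /b' !(mulrC _ (d p q)^-1) absnormZ // normP gtr0_norm ?invr_gt0 // mulrC.
  exact: lipnorm_ge_quot (proj2 G_Lip0) pq.
have := la_support (divr_ge0 (normr_ge0 _) (ltW D_gt0)) (divr_ge0 (normr_ge0 _) (ltW D_gt0)) N'.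
rewrite /a' /b' mulrA -mulrDl ler_pdivrMr // => supp.
rewrite correctionB; apply: le_trans (ler_normD _ _) _; apply: le_trans supp.
by rewrite lerD2l normrZ norm_u mulr1 normrM ger0_norm // ler_wpM2l // rho_dist.
Qed.

Lemma correction_limit pq : (forall n, (pq n).1 <> (pq n).2) ->
  (fun n => dquot d G (pq n)) @ \oo --> y ->
  (fun n => dquot d correction (pq n)) @ \oo --> P1 y + (la * b) *: u.
Proof.
move=> pq_neq G_pq; have K_ge0 : 0 <= 1 + la by rewrite addr_ge0.
apply: (cvg_dist_le K_ge0 _ G_pq) => n.
set D := d (pq n).1 (pq n).2; have D_gt0 : 0 < D := metric_gt0 hd (pq_neq n).
set c := (rho (P2 (G (pq n).1)) - rho (P2 (G (pq n).2))) / D.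
have c_b : `|c - b| <= `|y - dquot d G (pq n)|.
  apply: le_trans (norm_ddir_quot (P2 y) (w := P2 (dquot d G (pq n))) D_gt0 _) _.
    by rewrite /dquot linearZ scalerA mulfV ?gt_eqF // scale1r linearB.
  by rewrite -linearB distrC normP2_le.
have -> : dquot d correction (pq n) = P1 (dquot d G (pq n)) + (la * c) *: u.
  rewrite /dquot correctionB scalerDr; congr (_ + _); first by rewrite linearZ.
  by rewrite scalerA mulrCA [_^-1 * _]mulrC.
rewrite opprD addrACA -linearB -scalerBl -mulrBr.
apply: le_trans (ler_normD _ _) _; rewrite mulrDl mul1r lerD ?normP1_le //.
by rewrite normrZ norm_u mulr1 normrM ger0_norm // ler_wpM2l // distrC.
Qed.

Lemma norm_correction_limit : `|P1 y + (la * b) *: u| = a + la * b.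
Proof.
have a_gt0 := P1_attained_gt0.
rewrite /u scalerA -[X in X + _]scale1r -scalerDl normrZ ger0_norm; last first.
  by rewrite addr_ge0 // !mulr_ge0 ?invr_ge0 ?normr_ge0 // ltW.
by field; exact: lt0r_neq0.
Qed.

Lemma correction_normA : normA d x0 correction.
Proof.
have [[pq [pq_neq G_pq]] _] := G_y.
have g_lip : is_lipschitz d correction by exists (a + la * b); exact: correction_dist_le.
split.
  split => //; have [G0 _] := G_Lip0.
  by rewrite /correction G0 !raddf0 norm_ddir0 mulr0 scale0r addr0.
exists (P1 y + (la * b) *: u).
have g_cvg := correction_limit pq_neq G_pq.
apply: (attains_toward_cvg hd g_lip pq_neq g_cvg).
rewrite norm_correction_limit.
have C_ge0 : 0 <= a + la * b by rewrite addr_ge0 ?mulr_ge0 ?normr_ge0.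
exact: (lipnorm_le hd C_ge0 (fun p q _ => correction_dist_le p q)).
Qed.

Lemma correction_approx : lipnorm d (phi \- correction) <= (1 + la) * delta.
Proof.
have delta_ge0 : 0 <= delta := lipnorm_ge0 hd JphiG_lip.
apply: (lipnorm_le hd) => [|p q _ /=]; first by rewrite mulr_ge0 ?addr_ge0.
rewrite subrACA correctionB opprD addrA.
apply: le_trans (ler_normB _ _) _; rewrite -mulrA mulrDl mul1r lerD ?distP1_le //.
rewrite normrZ norm_u mulr1 normrM ger0_norm // ler_wpM2l //.
exact: le_trans (rho_dist p q) (distP2_le p q).
Qed.

End Support.

Lemma attaining_approximation :
  exists g, normA d x0 g /\ lipnorm d (phi \- g) <= delta + delta * s / (s - delta).
Proof.
have b_lt_s : b < s := le_lt_trans P2_attained_le delta_lt_s.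
have delta_ge0 : 0 <= delta := lipnorm_ge0 hd JphiG_lip.
have s_ge0 : 0 <= s := le_trans delta_ge0 (ltW delta_lt_s).
have [la la_ge0 la_support] :=
  absnorm_support hN (normr_ge0 _) (normr_ge0 _) b_lt_s absnorm_attained.
exists (correction la); split; first exact: correction_normA.
apply: le_trans (correction_approx la_ge0) _.
have la_le : la * (s - delta) <= s.
  have a_le_s : a <= s by rewrite -absnorm_attained -[X in X <= _]normr_id ge_absnorm_l.
  have := la_support 0 s (lexx 0) s_ge0.
  rewrite absnorm_0r // ger0_norm // add0r => /(_ (lexx s)) supp.
  rewrite mulrBr lerBlDr; apply: le_trans supp _.
  by rewrite lerD // ler_wpM2l // P2_attained_le.
rewrite mulrDl mul1r lerD2l ler_pdivlMr ?subr_gt0 // mulrAC [delta * s]mulrC.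
exact: ler_wpM2r.
Qed.

End Approximation.

Lemma A_dense_summand (v : Y1) p1 : v <> 0 -> p1 <> x0 -> A_dense d x0 Y -> A_dense d x0 Y1.
Proof.
move=> v_neq0 p1x0 A_dense_Y f f_Lip0 e e_gt0.
have e2_gt0 : 0 < e / 2 by rewrite divr_gt0.
have e16_gt0 : 0 < e / 16 by rewrite divr_gt0.
have [fp [fp_Lip0 f_fp fp_large]] := exists_large_perturbation hd f_Lip0 v_neq0 p1x0 e2_gt0.
have JF_Lip0 := section_Lip0 fp_Lip0.
have [G [[G_Lip0 [y G_y]] JF_G]] := A_dense_Y _ JF_Lip0 _ e16_gt0.
set delta := lipnorm d ((J \o fp) \- G) in JF_G.
have JF_G_lip := is_lipschitzB (proj2 JF_Lip0) (proj2 G_Lip0).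
have s_large : e / 4 - delta <= lipnorm d G.
  have := lipnorm_le_addB hd (proj2 G_Lip0) JF_G_lip.
  rewrite lipnorm_isometry_comp; last exact: section_isometry.
  by rewrite -/delta; lra.
have delta_ge0 : 0 <= delta := lipnorm_ge0 hd JF_G_lip.
have delta_lt_s : delta < lipnorm d G by lra.
have [g [g_A fp_g]] := attaining_approximation (proj2 fp_Lip0) G_Lip0 G_y delta_lt_s.
exists g; split => //.
apply: le_lt_trans (lipnormB_le hd (is_lipschitzB (proj2 f_Lip0) (proj2 fp_Lip0))
  (is_lipschitzB (proj2 fp_Lip0) (proj2 (proj1 g_A)))) _.
have : delta * lipnorm d G / (lipnorm d G - delta) <= 2 * delta.
  by rewrite ler_pdivrMr ?subr_gt0; nra.
by move: fp_g; rewrite -/delta; lra.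
Qed.

End AbsoluteSummand.

Theorem proposition3p4 (R : realType) (M : Type) (d : M -> M -> R) (x0 : M)
  (Y Y1 : completeNormedModType R) :
  complete_metric d ->
  absolute_summand Y1 Y ->
  A_dense d x0 Y ->
  A_dense d x0 Y1.
Proof.
move=> [hd _] [Y2 [N [P1 [P2 [hN [P1_lin [P2_lin [[P_inv _ PK'] normP]]]]]]]] A_dense_Y.
pose J (v : Y1) : Y := P_inv (v, 0).
have P1J v : P1 (J v) = v := congr1 fst (PK' (v, 0)).
have P2J v : P2 (J v) = 0 := congr1 snd (PK' (v, 0)).
have [p1 p1x0] := A_dense_two_points A_dense_Y.
have [[v v_neq0]|Y1_trivial] := pselect (exists v : Y1, v <> 0).
  exact (A_dense_summand hN P1_lin P2_lin normP P1J P2J hd v_neq0 p1x0 A_dense_Y).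
have Y1_zero (w : Y1) : w = 0.
  by apply: contrapT => w_neq0; apply: Y1_trivial; exists w.
exact (A_dense_trivial hd Y1_zero p1x0).
Qed.
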